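(* In the setting described in the context, $\mathbb E\left[\sum_{k\in U}f_\tau(k)w_k\right]\ge(1-e^{-1})R/4$, where the expectation is over the random experiment for SA2 and $R$ is the maximum total reward of a feasible service placement.
   Context: An SPSC instance: finite sets $S$ (services), $V$ (nodes), $U$ (users); sizes $s_i>0$; capacities $c_j>0$; for each user $k$ a service $i_k\in S$, a set $T_k\subseteq V$, a reward $w_k>0$. A placement $X=\{X_i\subseteq V\}$ is feasible iff $\sum_is_i\mathbf 1[j\in X_i]\le c_j$ for all $j$; its total reward is $\sum_kw_k\mathbf 1[T_k\cap X_{i_k}\ne\emptyset]$. Let $\{x_{ij}\},\{y_k\}$ be an optimal solution of the LP with nonnegative variables: maximize $\sum_ky_kw_k$ s.t. $y_k\le\sum_{j\in T_k}x_{i_kj}$, $y_k\le1$; $\sum_ix_{ij}s_i\le c_j$; $x_{ij}=0$ if $s_i>c_j$; $0\le x_{ij}\le1$. Let $\beta:=1/4,\gamma:=1/2,\delta:=1/4$, $\mathbb N=\{1,2,\dots\}$. For $j\in V$: $P_j^\oplus:=\{i:c_j/2<s_i\le c_j\}$, $P_j^\ominus:=\{i:c_j/4<s_i\le c_j/2\}$, $P_j^q:=\{i:\gamma^qc_j\beta<s_i\le\gamma^{q-1}c_j\beta\}$ ($q\in\mathbb N$); $d_j^q:=\sum_{i\in P_j^q}x_{ij}$ for $q\in\mathbb N\cup\{\oplus,\ominus\}$; $v_j:=\delta c_j/\sum_{i:s_i\le c_j\beta}s_ix_{ij}$; $n_j^q:=\lceil v_jd_j^q\rceil$; $h_j:=d_j^\ominus$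 if $d_j^\ominus<2$, else $d_j^\ominus/2$. A construction map $\zeta:V\to\{1,2,3\}$ has slot set $\Lambda(\zeta)$ (slot $\sigma$ has node $\nu(\sigma)$, class $\kappa(\sigma)$): for each $j$, one slot of class $\oplus$ if $\zeta(j)=1$; two slots of class $\ominus$ if $\zeta(j)=2$; for each $q\in\mathbb N$, $n_j^q$ slots of class $q$ if $\zeta(j)=3$; no other slots on $j$. A slot allocation of $\Lambda$ is $\tau:\Lambda\to S$ with $\tau(\sigma)\in P^{\kappa(\sigma)}_{\nu(\sigma)}$; $X^\tau_i:=\{j:\exists\sigma,\nu(\sigma)=j,\tau(\sigma)=i\}$; $f_\tau(k):=\mathbf 1[T_k\cap X^\tau_{i_k}\ne\emptyset]$. Random experiment: $\zeta(j)$ independent over $j$, equal to $1,2,3$ with probabilities $\delta d_j^\oplus,\ \delta h_j,\ 1-\delta d_j^\oplus-\delta h_j$; given $\zeta$, each slot $\sigma\in\Lambda(\zeta)$ independently gets $\tau(\sigma)=i$ with probability $x_{i\nu(\sigma)}/d^{\kappa(\sigma)}_{\nu(\sigma)}$, $i\in P^{\kappa(\sigma)}_{\nu(\sigma)}$. *)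

From HB Require Import structures.
From mathcomp Require Import all_boot all_order all_algebra.
From mathcomp Require Import reals sequences exp.
Set Implicit Arguments. Unset Strict Implicit. Unset Printing Implicit Defensive.
Import Order.TTheory GRing.Theory Num.Theory.
Local Open Scope ring_scope.

(* Size classes: oplus, ominus, and q in N = {1,2,...} (Num q, q >= 1 used). *)
Inductive cls := Plus | Minus | Num of nat.

(* A slot: (node, class, index among the slots of that class on that node). *)
Definition slot (V : Type) := (V * cls * nat)%type.

Section SPSC.
Variables (R : realType) (S V U : finType).
Variables (s : S -> R) (c : V -> R) (ik : U -> S) (T : U -> {set V}) (w : U -> R).

Definition beta : R := 1 / 4.
Definition gamma : R := 1 / 2.
Definition delta : R := 1 / 4.

Definition placement := {ffun S -> {set V}}.

Definition feasible (X : placement) : bool :=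
  [forall j : V, \sum_(i : S) s i * (j \in X i)%:R <= c j].

Definition reward (X : placement) : R :=
  \sum_(k : U) w k * (T k :&: X (ik k) != set0)%:R.

(* maximum total reward of a feasible placement (the empty placement is
   feasible with reward 0, so taking the max together with 0 is harmless) *)
Definition OPT : R := \big[Num.max/0]_(X : placement | feasible X) reward X.

Definition LP_feasible (x : S -> V -> R) (y : U -> R) : Prop :=
  (forall k, 0 <= y k) /\
  (forall k, y k <= \sum_(j in T k) x (ik k) j) /\
  (forall k, y k <= 1) /\
  (forall j, \sum_(i : S) x i j * s i <= c j) /\
  (forall i j, c j < s i -> x i j = 0) /\
  (forall i j, 0 <= x i j <= 1).

Definition LP_obj (y : U -> R) : R := \sum_(k : U) y k * w k.

Definition LP_optimal (x : S -> V -> R) (y : U -> R) : Prop :=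
  LP_feasible x y /\
  (forall x' y', LP_feasible x' y' -> LP_obj y' <= LP_obj y).

Variable (x : S -> V -> R).

Definition inP (j : V) (cl : cls) (i : S) : bool :=
  match cl with
  | Plus => (c j / 2 < s i) && (s i <= c j)
  | Minus => (c j / 4 < s i) && (s i <= c j / 2)
  | Num q => (gamma ^+ q * c j * beta < s i) && (s i <= gamma ^+ q.-1 * c j * beta)
  end.

Definition d (j : V) (cl : cls) : R := \sum_(i | inP j cl i) x i j.

Definition vv (j : V) : R :=
  delta * c j / \sum_(i | s i <= c j * beta) s i * x i j.

Definition nslots (j : V) (q : nat) : nat := `|Num.ceil (vv j * d j (Num q))|%N.

Definition h (j : V) : R := if d j Minus < 2 then d j Minus else d j Minus / 2.

(* Construction map zeta : V -> {1,2,3}, encoded by 'I_3 (value k <-> k+1). *)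
Definition cmap := {ffun V -> 'I_3}.

Definition pzeta (j : V) (k : 'I_3) : R :=
  match val k with
  | 0 => delta * d j Plus
  | 1 => delta * h j
  | _ => 1 - delta * d j Plus - delta * h j
  end.

Definition Pr_zeta (z : cmap) : R := \prod_(j : V) pzeta j (z j).

(* Q : number of classes q considered (all q <= Q); used with a Q beyond which
   every n_j^q vanishes, so that this is the full slot set Lambda(zeta). *)
Variable Q : nat.

Definition slots_at (j : V) (k : 'I_3) : seq (slot V) :=
  match val k with
  | 0 => [:: (j, Plus, 0%N)]
  | 1 => [:: (j, Minus, 0%N); (j, Minus, 1%N)]
  | _ => flatten [seq [seq (j, Num q, t) | t <- iota 0 (nslots j q)] | q <- iota 1 Q]
  end.

Definition Lambda (z : cmap) : seq (slot V) :=
  flatten [seq slots_at j (z j) | j <- enum V].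

Definition snode (sg : slot V) : V := sg.1.1.
Definition scls (sg : slot V) : cls := sg.1.2.

Definition pslot (sg : slot V) (i : S) : R :=
  if inP (snode sg) (scls sg) i then x i (snode sg) / d (snode sg) (scls sg) else 0.

Definition alloc (z : cmap) := {ffun 'I_(size (Lambda z)) -> S}.

Definition slot_of (z : cmap) (m : 'I_(size (Lambda z))) : slot V :=
  tnth (in_tuple (Lambda z)) m.

Definition Xtau (z : cmap) (tau : alloc z) (i : S) : {set V} :=
  [set j | [exists m, (snode (slot_of m) == j) && (tau m == i)]].

Definition ftau (z : cmap) (tau : alloc z) (k : U) : bool :=
  T k :&: Xtau tau (ik k) != set0.

Definition Pr_tau (z : cmap) (tau : alloc z) : R :=
  \prod_(m : 'I_(size (Lambda z))) pslot (slot_of m) (tau m).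

Definition gain (z : cmap) (tau : alloc z) : R :=
  \sum_(k : U) (ftau tau k)%:R * w k.

Definition expected_gain : R :=
  \sum_(z : cmap) Pr_zeta z * \sum_(tau : alloc z) Pr_tau tau * gain tau.

End SPSC.

(* Allocating the slots independently, user k is missed exactly when every slot misses it, so
   its probability of being served is 1 minus a product over the nodes j of the expected
   miss probability of the slots opened on j.  For j in T_k this factor is at most
   1 - (3/16) x_{i_k j}: if i_k is in the class (+) or (-) at j, the one or two slots of that
   class catch it; otherwise i_k is in some class q and the n_j^q >= v_j d_j^q slots of class q
   miss it with probability at most exp(-v_j x_{i_k j}), while the capacity constraint keeps
   the probability of construction 3 large enough compared with v_j.  Hence k is served with
   probability at least 1 - exp(-(3/16) y_k) >= (1 - 1/e) y_k / 4 by concavity, and summing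
   against the rewards compares the expected gain with the LP optimum, which bounds OPT. *)

From Pilot Require Import Defs.
From HB Require Import structures.
From mathcomp Require Import all_boot all_order all_algebra interval_inference.
From mathcomp Require Import reals sequences exp convex.
From mathcomp Require Import ring lra.
Set Implicit Arguments. Unset Strict Implicit. Unset Printing Implicit Defensive.
Import Order.TTheory GRing.Theory Num.Theory.
Local Open Scope ring_scope.

Section ExpBounds.
Variable R : realType.
Implicit Types a l t v P : R.

Lemma expR_mul_le_chord [l] a : 0 <= l <= 1 -> expR (l * a) <= l * expR a + (1 - l).
Proof.
case/andP=> l_ge0 l_le1; have := convex_expR (Itv01 l_ge0 l_le1) a 0.
by rewrite !convRE /= expR0 mulr0 addr0 mulr1.
Qed.

Lemma exprn_le_expR a b n : -1 <= a -> a * n%:R = b -> (1 + a) ^+ n <= expR b.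
Proof.
move=> a_ge <-; rewrite expRM_natr; apply: lerXn2r; rewrite ?nnegrE ?expR_ge0 //.
  lra.
exact: expR_ge1Dx.
Qed.

Lemma expRN_le_inv [a b] : 0 < b -> b <= expR a -> expR (- a) <= b^-1.
Proof. by move=> b_gt0 b_le; rewrite expRN lef_pV2 ?posrE ?expR_gt0. Qed.

Lemma expRN_half_le : expR (- (1 / 2)) <= 5 / 8 :> R.
Proof.
have e_ge : 8 / 5 <= expR (1 / 2) :> R.
  by apply: le_trans (_ : 8 / 5 <= (1 + 1/8) ^+ 4) (exprn_le_expR (n := 4) _ _); lra.
by apply: le_trans (expRN_le_inv _ e_ge) _; rewrite ?invf_div; lra.
Qed.

Lemma mul_one_sub_expRN_le a t : 0 <= t <= 1 -> t * (1 - expR (- a)) <= 1 - expR (- a * t).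
Proof. by move=> t01; rewrite [- a * t]mulrC; have := expR_mul_le_chord (- a) t01; lra. Qed.

Lemma one_sub_expRN1_le : (1 - expR (-1)) / 4 <= 1 - expR (- (3 / 16)) :> R.
Proof.
have e1 : 17 / 50 <= expR (-1) :> R.
  by apply: le_trans (_ : 17 / 50 <= (1 - 1/8) ^+ 8) (exprn_le_expR (n := 8) _ _); lra.
have e316 : 6 / 5 <= expR (3 / 16) :> R.
  by apply: le_trans (_ : 6 / 5 <= (1 + 3/64) ^+ 4) (exprn_le_expR (n := 4) _ _); lra.
by have := expRN_le_inv _ e316; rewrite invf_div; lra.
Qed.

Lemma mul_one_sub_expRN_ge v P : 0 < v -> 1 <= 4 * v * P -> 1/4 + 1/(8*v) <= P ->
  3/16 <= P * (1 - expR (- v)).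
Proof.
move=> v_gt0 vP1 vP2; have P_ge0 : 0 <= P by nra.
have e_half := expRN_half_le.
(* For v <= 1/2 convexity gives 1 - e^-v >= 3v/4; for larger v,
   e^-v = e^-(1/2) e^-(v - 1/2) <= (5/8) / (v + 1/2). *)
case: (lerP v (1/2)) => v_half.
  have v01 : 0 <= 2 * v <= 1 by apply/andP; split; lra.
  have := expR_mul_le_chord (- (1/2)) v01.
  by rewrite (_ : 2 * v * - (1/2) = - v); nra.
have e_split : expR (- v) = expR (- (1/2)) * expR (- (v - 1/2)).
  by rewrite -expRD; congr expR; lra.
have e_tail : expR (- (v - 1/2)) <= (v + 1/2)^-1.
  by apply: expRN_le_inv; [lra | have := expR_ge1Dx (v - 1/2); lra].
have inv_v : (v + 1/2)^-1 * (v + 1/2) = 1 by rewrite mulVf //; lra.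
have inv_8v : (8 * v)^-1 * (8 * v) = 1 by rewrite mulVf //; lra.
have : expR (- v) <= 5/8 * (v + 1/2)^-1.
  by rewrite e_split; apply: ler_pM; rewrite ?expR_ge0.
rewrite -[1/(8*v)]mul1r in vP2.
have : 0 < (v + 1/2)^-1 by rewrite invr_gt0; lra.
nra.
Qed.

End ExpBounds.

Lemma prodr_natr_forall (R : pzSemiRingType) (I : finType) (b : pred I) :
  \prod_i ((b i)%:R : R) = [forall i, b i]%:R.
Proof.
have natb_and : {morph nat_of_bool : b1 b2 / b1 && b2 >-> (b1 * b2)%N}.
  by move=> b1 b2; rewrite mulnb.
by rewrite -natr_prod -(big_morph _ natb_and (erefl : nat_of_bool true = 1%N)) big_andE.
Qed.

Lemma prod_le_factor (R : numDomainType) (I : eqType) (r : seq I) (F : I -> R) a :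
  (forall b, b \in r -> 0 <= F b <= 1) -> a \in r -> \prod_(b <- r) F b <= F a.
Proof.
move=> F01 ar; rewrite (big_rem a) //=; have /andP[Fa_ge0 _] := F01 a ar.
rewrite ler_piMr // big_seq; apply: prodr_ile1 => b /mem_rem; exact: F01.
Qed.

Lemma exists_gamma_class (R : realType) (a b : R) : 0 < a -> a <= b ->
  exists2 q, (0 < q)%N & gamma R ^+ q * b < a <= gamma R ^+ q.-1 * b.
Proof.
move=> a_gt0 a_le_b.
have gammaX n : gamma R ^+ n * b = b / 2 ^+ n by rewrite /gamma div1r exprVn mulrC.
have below : exists n, gamma R ^+ n * b < a.
  have b_a_ge0 : 0 <= b / a by rewrite divr_ge0 //; lra.
  exists (Num.Def.archi_bound (b / a)); set n := Num.Def.archi_bound _.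
  have n_lt : b / a < n%:R := archi_boundP b_a_ge0.
  have n_le : n%:R <= 2 ^+ n :> R by rewrite -natrX ler_nat ltnW // ltn_expl.
  rewrite gammaX ltr_pdivrMr ?exprn_gt0 //.
  by move: n_lt; rewrite ltr_pdivrMr // => /lt_le_trans; apply; rewrite mulrC ler_wpM2l //; lra.
have [q q_below q_min] := ex_minnP below.
have q_gt0 : (0 < q)%N by case: q q_below {q_min} => //; rewrite expr0 mul1r; lra.
exists q => //; rewrite q_below /= leNgt; apply/negP => /q_min.
by rewrite leqNgt ltn_predL q_gt0.
Qed.

Section Experiment.
Variables (R : realType) (S V U : finType).
Variables (s : S -> R) (c : V -> R) (ik : U -> S) (T : U -> {set V}) (w : U -> R).
Variables (x : S -> V -> R) (Q : nat).

Local Notation pslot := (pslot s c x).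
Local Notation pzeta := (pzeta s c x).
Local Notation slots_at := (slots_at s c x Q).
Local Notation slot_of z := (@slot_of R S V s c x Q z).
Local Notation alloc := (alloc s c x Q).

Definition node_mean (F : slot V -> R) (j : V) : R :=
  \sum_k pzeta j k * \prod_(sg <- slots_at j k) F sg.

Lemma prod_slot_of z (F : slot V -> R) :
  \prod_m F (slot_of z m) = \prod_j \prod_(sg <- slots_at j (z j)) F sg.
Proof.
rewrite -[LHS](big_tuple _ _ (in_tuple (Lambda s c x Q z)) xpredT F) /=.
by rewrite /Lambda big_flatten big_map big_enum.
Qed.

Lemma sum_cmap_prod_slots (F : slot V -> R) :
  \sum_(z : cmap V) Pr_zeta s c x z * \prod_m F (slot_of z m) = \prod_j node_mean F j.
Proof.
rewrite /node_mean bigA_distr_bigA; apply: eq_bigr => z _.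
by rewrite prod_slot_of /Pr_zeta -big_split.
Qed.

Lemma sum_alloc_prod z (F : slot V -> S -> R) :
  \sum_(tau : alloc z) \prod_m F (slot_of z m) (tau m) = \prod_m \sum_i F (slot_of z m) i.
Proof. by rewrite bigA_distr_bigA. Qed.

Definition hits (A : {set V}) (i0 : S) (sg : slot V) (i : S) : bool :=
  (snode sg \in A) && (i == i0).

Definition miss_prob (A : {set V}) (i0 : S) (sg : slot V) : R :=
  \sum_(i | ~~ hits A i0 sg i) pslot sg i.

Lemma setI_Xtau_neq0 z (tau : alloc z) (A : {set V}) (i0 : S) :
  (A :&: Xtau tau i0 != set0) = [exists m, hits A i0 (slot_of z m) (tau m)].
Proof.
apply/set0Pn/existsP => [[j] | [m /andP[mA /eqP taum]]].
  rewrite !inE => /andP[jA /existsP[m /andP[/eqP jm /eqP taum]]].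
  by exists m; rewrite /hits jm jA taum eqxx.
by exists (snode (slot_of z m)); rewrite !inE mA; apply/existsP; exists m; rewrite taum !eqxx.
Qed.

Lemma sum_alloc_covered z (A : {set V}) (i0 : S) :
  \sum_(tau : alloc z) Pr_tau tau * (A :&: Xtau tau i0 != set0)%:R =
  \prod_m \sum_i pslot (slot_of z m) i - \prod_m miss_prob A i0 (slot_of z m).
Proof.
have covered_split (tau : alloc z) : Pr_tau tau * (A :&: Xtau tau i0 != set0)%:R =
    Pr_tau tau - \prod_m (pslot (slot_of z m) (tau m) * (~~ hits A i0 (slot_of z m) (tau m))%:R).
  rewrite big_split /= prodr_natr_forall -negb_exists -setI_Xtau_neq0.
  by case: (_ != set0); rewrite /= ?mulr1 ?mulr0 ?subr0 ?subrr.
rewrite (eq_bigr _ (fun tau _ => covered_split tau)) sumrB /Pr_tau sum_alloc_prod.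
rewrite (sum_alloc_prod z (fun sg i => pslot sg i * (~~ hits A i0 sg i)%:R)).
congr (_ - _); apply: eq_bigr => m _; rewrite /miss_prob [RHS]big_mkcond.
by apply: eq_bigr => i _; rewrite mulr_natr mulrb.
Qed.

Lemma sum_pslot sg : \sum_i pslot sg i = (d s c x (snode sg) (scls sg) != 0)%:R.
Proof.
rewrite /pslot -big_mkcond /= -mulr_suml -/(d s c x (snode sg) (scls sg)).
by case: eqP => [-> | /eqP d_neq0]; rewrite ?mul0r ?divff.
Qed.

Lemma sum_pzeta j : \sum_k pzeta j k = 1.
Proof. by rewrite !big_ord_recl big_ord0 /pzeta /=; lra. Qed.

(* A slot of a class with d = 0 has total probability 0 (x / 0 = 0), but then
   zeta(j) opens no such slot. *)
Lemma pzeta_mul_total j k :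
  pzeta j k * \prod_(sg <- slots_at j k) \sum_i pslot sg i = pzeta j k.
Proof.
case: k => [[|[|k]] k_lt]; rewrite /slots_at /pzeta /=.
- by rewrite big_seq1 sum_pslot /=; case: eqP => [-> | _]; rewrite ?mulr0 ?mul0r ?mulr1.
- rewrite !big_cons big_nil !sum_pslot /= /h.
  by case: eqP => [-> | _]; rewrite ?mulr1 // mulr0 mul0r; case: ifP; rewrite ?mul0r ?mulr0.
- rewrite big_flatten big_map big1 ?mulr1 // => q _; rewrite big_map.
  have [dq0 | dq_neq0] := eqVneq (d s c x j (Defs.Num q)) 0.
    by rewrite /nslots dq0 mulr0 ceil0 big_nil.
  by apply: big1 => t _; rewrite sum_pslot /= dq_neq0.
Qed.

Lemma node_mean_total j : node_mean (fun sg => \sum_i pslot sg i) j = 1.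
Proof. by rewrite -(sum_pzeta j); apply: eq_bigr => k _; rewrite pzeta_mul_total. Qed.

Lemma expected_cover (A : {set V}) (i0 : S) :
  \sum_(z : cmap V) Pr_zeta s c x z *
     \sum_(tau : alloc z) Pr_tau tau * (A :&: Xtau tau i0 != set0)%:R =
  1 - \prod_j node_mean (miss_prob A i0) j.
Proof.
rewrite (eq_bigr (fun z => Pr_zeta s c x z * \prod_m \sum_i pslot (slot_of z m) i -
                          Pr_zeta s c x z * \prod_m miss_prob A i0 (slot_of z m))); last first.
  by move=> z _; rewrite sum_alloc_covered mulrBr.
rewrite sumrB (sum_cmap_prod_slots (fun sg => \sum_i pslot sg i)) sum_cmap_prod_slots.
by rewrite big1 // => j _; exact: node_mean_total.
Qed.

Lemma expected_gainE :
  expected_gain s c ik T w x Q = \sum_k w k * (1 - \prod_j node_mean (miss_prob (T k) (ik k)) j).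
Proof.
have gain_z (z : cmap V) :
    Pr_zeta s c x z * \sum_(tau : alloc z) Pr_tau tau * gain ik T w tau =
    \sum_k w k * (Pr_zeta s c x z * \sum_(tau : alloc z) Pr_tau tau * (ftau ik T tau k)%:R).
  transitivity (\sum_(tau : alloc z) \sum_k
      w k * (Pr_zeta s c x z * (Pr_tau tau * (ftau ik T tau k)%:R))).
    rewrite mulr_sumr; apply: eq_bigr => tau _; rewrite /gain !mulr_sumr.
    by apply: eq_bigr => k _; ring.
  rewrite (exchange_big _ (index_enum (alloc z)) (index_enum U)).
  by apply: eq_bigr => k _; rewrite !mulr_sumr.
rewrite /expected_gain (eq_bigr _ (fun z _ => gain_z z)).
rewrite (exchange_big _ (index_enum (cmap V)) (index_enum U)); apply: eq_bigr => k _.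
by rewrite -expected_cover mulr_sumr.
Qed.

End Experiment.

Section Relaxation.
Variables (R : realType) (S V U : finType).
Variables (s : S -> R) (c : V -> R) (ik : U -> S) (T : U -> {set V}) (w : U -> R).
Hypothesis s_ge0 : forall i, 0 <= s i.

Definition placement_x (X : placement S V) (i : S) (j : V) : R := (j \in X i)%:R.
Definition placement_y (X : placement S V) (k : U) : R := (T k :&: X (ik k) != set0)%:R.

Lemma placement_LP_feasible X :
  feasible s c X -> LP_feasible s c ik T (placement_x X) (placement_y X).
Proof.
move=> /forallP X_cap.
have cap j : \sum_i placement_x X i j * s i <= c j.
  by under eq_bigr do rewrite mulrC; exact: X_cap.
have x01 i j : 0 <= placement_x X i j <= 1 by rewrite ler0n lern1 leq_b1.
split; first by move=> k; rewrite ler0n.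
split.
  move=> k; rewrite /placement_y; case: set0Pn => [[j] | _] /=.
    rewrite inE => /andP[jT jX]; rewrite (bigD1 j) //= {1}/placement_x jX lerDl.
    by apply: sumr_ge0 => i _; case/andP: (x01 (ik k) i).
  by apply: sumr_ge0 => i _; case/andP: (x01 (ik k) i).
split; first by move=> k; rewrite lern1 leq_b1.
split; first exact: cap.
split=> // i j c_lt; rewrite /placement_x; case: (boolP (j \in X i)) => // jX.
have := cap j; rewrite (bigD1 i) //= {1}/placement_x jX mul1r.
have : 0 <= \sum_(i' | i' != i) placement_x X i' j * s i'.
  by apply: sumr_ge0 => i' _; rewrite mulr_ge0 ?ler0n.
lra.
Qed.

Lemma OPT_le_LP_obj x y : (forall k, 0 <= w k) ->
  LP_optimal s c ik T w x y -> OPT s c ik T w <= LP_obj w y.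
Proof.
move=> w_ge0 [[y_ge0 _] y_max]; apply: bigmax_le => [|X X_feas].
  by rewrite sumr_ge0 // => k _; rewrite mulr_ge0.
rewrite (_ : reward ik T w X = LP_obj w (placement_y X)); first exact/y_max/placement_LP_feasible.
by apply: eq_bigr => k _; rewrite mulrC.
Qed.

End Relaxation.

Section NodeBounds.
Variables (R : realType) (S V : finType) (s : S -> R) (c : V -> R) (x : S -> V -> R) (Q : nat).
Hypotheses (s_gt0 : forall i, 0 < s i) (c_gt0 : forall j, 0 < c j).
Hypotheses (x_ge0 : forall i j, 0 <= x i j) (x_le1 : forall i j, x i j <= 1).
Hypothesis x_cap : forall j, \sum_i x i j * s i <= c j.
Hypothesis x_oversize : forall i j, c j < s i -> x i j = 0.
Hypothesis nslots_gtQ : forall j q, (Q < q)%N -> nslots s c x j q = 0%N.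

Local Notation d := (d s c x).
Local Notation inP := (inP s c).
Local Notation pslot := (pslot s c x).
Local Notation pzeta := (pzeta s c x).
Local Notation slots_at := (slots_at s c x Q).
Local Notation node_mean := (node_mean s c x Q).
Local Notation miss_prob := (miss_prob s c x).
Local Notation zeta_large := (@Ordinal 3 0 isT).
Local Notation zeta_medium := (@Ordinal 3 1 isT).
Local Notation zeta_small := (@Ordinal 3 2 isT).
Implicit Types (A : {set V}) (j : V) (t : nat) (sg : slot V) (F : slot V -> R).

Definition load (j : V) (P : pred S) : R := \sum_(i | P i) s i * x i j.
Definition small_services (j : V) : pred S := fun i => s i <= c j * beta R.

Lemma sx_ge0 i j : 0 <= s i * x i j.
Proof. exact: mulr_ge0 (ltW (s_gt0 i)) (x_ge0 i j). Qed.

Lemma load_ge0 j P : 0 <= load j P.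
Proof. by apply: sumr_ge0 => i _; exact: sx_ge0. Qed.

Lemma le_load j (P : pred S) i : P i -> s i * x i j <= load j P.
Proof. by move=> Pi; rewrite /load (bigD1 i) //= lerDl; apply: sumr_ge0 => *; exact: sx_ge0. Qed.

Lemma d_ge0 j cl : 0 <= d j cl.
Proof. by apply: sumr_ge0. Qed.

Lemma x_le_d j cl i : inP j cl i -> x i j <= d j cl.
Proof. by move=> Pi; rewrite /d (bigD1 i) //= lerDl; apply: sumr_ge0. Qed.

Lemma mul_d_le_load j cl (a : R) :
  (forall i, inP j cl i -> c j <= a * s i) -> c j * d j cl <= a * load j (inP j cl).
Proof.
move=> c_le; rewrite /d /load !mulr_sumr; apply: ler_sum => i /c_le c_le_i.
by rewrite mulrA ler_wpM2r.
Qed.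

Lemma load_classes_le j :
  load j (inP j Plus) + load j (inP j Minus) + load j (small_services j) <= c j.
Proof.
apply: le_trans (x_cap j).
rewrite /load [X in X + _ + _]big_mkcond [X in _ + X + _]big_mkcond [X in _ + _ + X]big_mkcond.
rewrite -!big_split /=.
apply: ler_sum => i _; have := sx_ge0 i j; rewrite [x i j * s i]mulrC /small_services /beta /=.
by case: ifP => [/andP[? ?]|_]; case: ifP => [/andP[? ?]|_]; case: ifP => // ? ?; lra.
Qed.

Lemma pzeta_small_ge j :
  load j (small_services j) <= c j * pzeta j zeta_small /\
  c j / 4 + load j (small_services j) / 2 <= c j * pzeta j zeta_small.
Proof.
have plus : c j * d j Plus <= 2 * load j (inP j Plus).
  by apply: mul_d_le_load => i /andP[? ?]; lra.
have minus : c j * d j Minus <= 4 * load j (inP j Minus).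
  by apply: mul_d_le_load => i /andP[? ?]; lra.
have c_pos := c_gt0 j.
have h_le : c j * h s c x j <= 4 * load j (inP j Minus) /\
            c j * h s c x j <= c j + 2 * load j (inP j Minus).
  by rewrite /h; have := d_ge0 j Minus; case: ltrP => ? ?; split; nra.
have := load_classes_le j; have := load_ge0 j (inP j Plus); have := load_ge0 j (inP j Minus).
by case: h_le; rewrite /pzeta /delta /=; split; nra.
Qed.

Lemma pzeta_ge0 j k : 0 <= pzeta j k.
Proof.
case: k => [[|[|k]] k_lt]; rewrite /pzeta /delta /=.
- by have := d_ge0 j Plus; lra.
- by rewrite /h; have := d_ge0 j Minus; case: ifP => _; lra.
- have [P_ge _] := pzeta_small_ge j; move: P_ge; rewrite /pzeta /delta /=.
  by have := load_ge0 j (small_services j); have := c_gt0 j; nra.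
Qed.

Lemma pslot_ge0 sg i : 0 <= pslot sg i.
Proof. by rewrite /pslot; case: ifP => // _; apply: divr_ge0 (x_ge0 _ _) (d_ge0 _ _). Qed.

Lemma miss_prob_in01 A (i0 : S) sg : 0 <= miss_prob A i0 sg <= 1.
Proof.
apply/andP; split; first by apply: sumr_ge0 => i _; exact: pslot_ge0.
apply: le_trans (_ : \sum_i pslot sg i <= 1); last by rewrite sum_pslot lern1 leq_b1.
rewrite [leRHS](bigID (fun i => ~~ hits A i0 sg i)) /= lerDl.
by apply: sumr_ge0 => i _; exact: pslot_ge0.
Qed.

Lemma miss_prob_hit A (i0 : S) j cl t : j \in A -> inP j cl i0 -> 0 < x i0 j ->
  miss_prob A i0 (j, cl, t) = 1 - x i0 j / d j cl.
Proof.
move=> jA i0P x_gt0.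
have d_neq0 : d j cl != 0 by rewrite gt_eqF // (lt_le_trans x_gt0) ?x_le_d.
have pslot_i0 : pslot (j, cl, t) i0 = x i0 j / d j cl by rewrite /pslot /= i0P.
have /eqP sum1 : \sum_i pslot (j, cl, t) i == 1 by rewrite sum_pslot /= d_neq0.
rewrite -pslot_i0 -sum1 (bigD1 i0) //= addrAC subrr add0r.
by apply: eq_bigl => i; rewrite /hits /= jA.
Qed.

Lemma node_mean_ge0 F j : (forall sg, 0 <= F sg) -> 0 <= node_mean F j.
Proof.
move=> F_ge0; apply: sumr_ge0 => k _; apply: mulr_ge0; first exact: pzeta_ge0.
by apply: prodr_ge0 => sg _.
Qed.

Lemma node_mean_le F j k0 : (forall sg, 0 <= F sg <= 1) ->
  node_mean F j <= 1 - pzeta j k0 * (1 - \prod_(sg <- slots_at j k0) F sg).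
Proof.
move=> F01.
have G_le1 k : \prod_(sg <- slots_at j k) F sg <= 1 by apply: prodr_ile1.
have gap : 1 - node_mean F j = \sum_k pzeta j k * (1 - \prod_(sg <- slots_at j k) F sg).
  rewrite /node_mean -{1}(sum_pzeta s c x j) -sumrB.
  by apply: eq_bigr => k _; rewrite mulrBr mulr1.
suff : pzeta j k0 * (1 - \prod_(sg <- slots_at j k0) F sg) <= 1 - node_mean F j by lra.
rewrite gap (bigD1 k0) //= lerDl; apply: sumr_ge0 => k _.
by apply: mulr_ge0; [exact: pzeta_ge0 | have := G_le1 k; lra].
Qed.

Lemma node_mean_le1 F j : (forall sg, 0 <= F sg <= 1) -> node_mean F j <= 1.
Proof.
move=> F01; apply: le_trans (node_mean_le j ord0 F01) _.
have := pzeta_ge0 j ord0; have : \prod_(sg <- slots_at j ord0) F sg <= 1 by apply: prodr_ile1.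
nra.
Qed.

Lemma node_mean_miss_large A (i0 : S) j : j \in A -> inP j Plus i0 -> 0 < x i0 j ->
  node_mean (miss_prob A i0) j <= 1 - x i0 j / 4.
Proof.
move=> jA i0P x_gt0; have := node_mean_le j zeta_large (miss_prob_in01 A i0).
rewrite /slots_at /= big_seq1 miss_prob_hit // /pzeta /delta /=.
have e : d j Plus * (x i0 j / d j Plus) = x i0 j.
  by rewrite mulrC divfK // gt_eqF // (lt_le_trans x_gt0) ?x_le_d.
lra.
Qed.

Lemma node_mean_miss_medium A (i0 : S) j : j \in A -> inP j Minus i0 -> 0 < x i0 j ->
  node_mean (miss_prob A i0) j <= 1 - 3/16 * x i0 j.
Proof.
move=> jA i0P x_gt0; have := node_mean_le j zeta_medium (miss_prob_in01 A i0).
rewrite /slots_at /= !big_cons big_nil !miss_prob_hit // mulr1 /pzeta /delta /h /=.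
have d_gt0 : 0 < d j Minus by apply: lt_le_trans x_gt0 (x_le_d i0P).
set p := x i0 j / d j Minus.
have e : d j Minus * p = x i0 j by rewrite /p mulrC divfK // gt_eqF.
have p_le1 : p <= 1 by rewrite /p ler_pdivrMr // mul1r x_le_d.
have p_gt0 : 0 < p by rewrite /p divr_gt0.
have x_le := x_le1 i0 j.
have e2 : d j Minus * (p * p) = x i0 j * p by rewrite mulrA e.
case: (ltrP (d j Minus) 2) => [_ | d_ge2] /=; first nra.
have p_half : p <= 1/2 by nra.
nra.
Qed.

Lemma vv_mul_d_le_nslots j q : 0 <= vv s c x j ->
  vv s c x j * d j (Defs.Num q) <= (nslots s c x j q)%:R.
Proof.
move=> v_ge0; have vd_ge0 := mulr_ge0 v_ge0 (d_ge0 j (Defs.Num q)).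
by rewrite /nslots natr_absz ger0_norm ?ceil_ge // ceil_ge0; lra.
Qed.

Lemma prod_small_slots_miss_le A (i0 : S) j q : j \in A -> (0 < q)%N -> (q <= Q)%N ->
  inP j (Defs.Num q) i0 -> 0 < x i0 j ->
  \prod_(sg <- slots_at j zeta_small) miss_prob A i0 sg <=
  (1 - x i0 j / d j (Defs.Num q)) ^+ nslots s c x j q.
Proof.
move=> jA q_gt0 q_le i0P x_gt0; rewrite /slots_at /= big_flatten /= big_map.
apply: le_trans (prod_le_factor _ (_ : q \in iota 1 Q)) _.
- move=> q' _; apply/andP; split.
    by apply: prodr_ge0 => sg _; case/andP: (miss_prob_in01 A i0 sg).
  by apply: prodr_ile1 => sg _; exact: miss_prob_in01.
- by rewrite mem_iota add1n ltnS q_gt0 q_le.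
rewrite big_map (eq_bigr (fun=> 1 - x i0 j / d j (Defs.Num q))) => [|t _].
  by rewrite big_const_seq count_predT size_iota iter_mulr mulr1.
exact: miss_prob_hit.
Qed.

Lemma pzeta_small_gain j : 0 < load j (small_services j) ->
  3/16 <= pzeta j zeta_small * (1 - expR (- vv s c x j)).
Proof.
move=> L_gt0; have c_pos := c_gt0 j; have [P_ge1 P_ge2] := pzeta_small_ge j.
set L := load j (small_services j) in L_gt0 P_ge1 P_ge2.
have v_def : vv s c x j = 1/4 * c j / L by [].
have v_gt0 : 0 < vv s c x j by rewrite v_def divr_gt0 //; lra.
apply: mul_one_sub_expRN_ge => //.
  rewrite (_ : 4 * vv s c x j * _ = c j * pzeta j zeta_small / L).
    by rewrite ler_pdivlMr // mul1r.
  by rewrite v_def; field; rewrite lt0r_neq0.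
rewrite -(ler_pM2l c_pos) (_ : c j * (1/4 + 1/(8 * vv s c x j)) = c j / 4 + L / 2) //.
by rewrite v_def; field; rewrite ?lt0r_neq0.
Qed.

Lemma node_mean_miss_small A (i0 : S) j : j \in A -> s i0 <= c j * beta R -> 0 < x i0 j ->
  node_mean (miss_prob A i0) j <= 1 - 3/16 * x i0 j.
Proof.
move=> jA i0_small x_gt0.
have [q q_gt0 /andP[q_lo q_hi]] := exists_gamma_class (s_gt0 i0) i0_small.
have i0P : inP j (Defs.Num q) i0 by rewrite /= -!mulrA q_lo q_hi.
have L_gt0 : 0 < load j (small_services j).
  exact: lt_le_trans (mulr_gt0 (s_gt0 i0) x_gt0) (le_load j i0_small).
set v := vv s c x j; set n := nslots s c x j q.
have v_gt0 : 0 < v by rewrite /v /vv divr_gt0 // /delta; have := c_gt0 j; lra.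
have d_gt0 : 0 < d j (Defs.Num q) := lt_le_trans x_gt0 (x_le_d i0P).
have n_ge : v * d j (Defs.Num q) <= n%:R := vv_mul_d_le_nslots q (ltW v_gt0).
have q_le : (q <= Q)%N.
  rewrite leqNgt; apply/negP => /(nslots_gtQ j) n0; move: n_ge; rewrite /n n0.
  by have := mulr_gt0 v_gt0 d_gt0; lra.
set p := x i0 j / d j (Defs.Num q).
have vx : v * x i0 j = p * (v * d j (Defs.Num q)) by rewrite /p; field; rewrite gt_eqF.
have p_le1 : p <= 1 by rewrite /p ler_pdivrMr // mul1r x_le_d.
have p_gt0 : 0 < p by rewrite /p divr_gt0.
have pow_exp : (1 - p) ^+ n <= expR (- (v * x i0 j)).
  apply: le_trans (_ : expR (- p) ^+ n <= _).
    by apply: lerXn2r; rewrite ?nnegrE ?expR_ge0 //; [lra | have := expR_ge1Dx (- p); lra].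
  by rewrite -expRM_natr ler_expR vx; nra.
have chord : expR (- (v * x i0 j)) <= x i0 j * expR (- v) + (1 - x i0 j).
  rewrite (_ : - (v * x i0 j) = x i0 j * - v); last by ring.
  by apply: expR_mul_le_chord; rewrite (ltW x_gt0) x_le1.
have G_le := le_trans (prod_small_slots_miss_le jA q_gt0 q_le i0P x_gt0) (le_trans pow_exp chord).
have := pzeta_small_gain L_gt0; have := pzeta_ge0 j zeta_small.
have := node_mean_le j zeta_small (miss_prob_in01 A i0).
nra.
Qed.

Lemma node_mean_miss_le A (i0 : S) j : j \in A ->
  node_mean (miss_prob A i0) j <= 1 - 3/16 * x i0 j.
Proof.
move=> jA; have [x_le0 | x_gt0] := lerP (x i0 j) 0.
  by have := node_mean_le1 j (miss_prob_in01 A i0); have := x_ge0 i0 j; lra.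
have s_le : s i0 <= c j by rewrite leNgt; apply/negP => /x_oversize; lra.
have c_pos := c_gt0 j.
have [s_large | s_le_half] := ltrP (c j / 2) (s i0).
  have i0P : inP j Plus i0 by rewrite /= s_large s_le.
  by have := node_mean_miss_large jA i0P x_gt0; lra.
have [s_medium | s_small] := ltrP (c j / 4) (s i0).
  by apply: node_mean_miss_medium; rewrite //= s_medium s_le_half.
by apply: node_mean_miss_small; rewrite // /beta; lra.
Qed.

Lemma prod_node_mean_miss_le A (i0 : S) :
  \prod_j node_mean (miss_prob A i0) j <= expR (- (3/16) * \sum_(j in A) x i0 j).
Proof.
rewrite mulr_sumr expR_sum [leRHS]big_mkcond /=; apply: ler_prod => j _.
rewrite node_mean_ge0 => [|sg]; last by case/andP: (miss_prob_in01 A i0 sg).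
case: ifP => jA; last exact/node_mean_le1/miss_prob_in01.
apply: le_trans (node_mean_miss_le i0 jA) _.
by have := expR_ge1Dx (- (3/16) * x i0 j); lra.
Qed.

Lemma one_sub_prod_node_mean_miss_ge A (i0 : S) (y0 : R) :
  0 <= y0 <= 1 -> y0 <= \sum_(j in A) x i0 j ->
  (1 - expR (-1)) / 4 * y0 <= 1 - \prod_j node_mean (miss_prob A i0) j.
Proof.
move=> y01 y0_le; have := prod_node_mean_miss_le A i0.
have : expR (- (3/16) * \sum_(j in A) x i0 j) <= expR (- (3/16) * y0) by rewrite ler_expR; lra.
have := mul_one_sub_expRN_le (3/16) y01.
have : (1 - expR (-1)) / 4 * y0 <= (1 - expR (- (3/16))) * y0.
  by rewrite ler_wpM2r ?one_sub_expRN1_le //; case/andP: y01.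
lra.
Qed.

End NodeBounds.

Theorem theorem10 (R : realType) (S V U : finType)
  (s : S -> R) (c : V -> R) (ik : U -> S) (T : U -> {set V}) (w : U -> R)
  (s_pos : forall i, 0 < s i) (c_pos : forall j, 0 < c j) (w_pos : forall k, 0 < w k)
  (x : S -> V -> R) (y : U -> R)
  (xy_opt : LP_optimal s c ik T w x y)
  (Q : nat) (HQ : forall (j : V) (q : nat), (Q < q)%N -> nslots s c x j q = 0%N) :
  expected_gain s c ik T w x Q >= (1 - expR (-1)) * OPT s c ik T w / 4.
Proof.
have [[y_ge0 [y_le_x [y_le1 [x_cap [x_oversize x01]]]]] _] := xy_opt.
have x_ge0 i j : 0 <= x i j by case/andP: (x01 i j).
have x_le1 i j : x i j <= 1 by case/andP: (x01 i j).
have w_ge0 k : 0 <= w k by exact: ltW.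
have coef_ge0 : 0 <= (1 - expR (-1)) / 4 :> R by rewrite divr_ge0 // subr_ge0 expR_le1 lerN10.
rewrite expected_gainE mulrAC.
apply: le_trans (ler_wpM2l coef_ge0 (OPT_le_LP_obj (fun i => ltW (s_pos i)) w_ge0 xy_opt)) _.
rewrite /LP_obj mulr_sumr; apply: ler_sum => k _; rewrite mulrA mulrC ler_wpM2l //.
apply: one_sub_prod_node_mean_miss_ge => //; first by rewrite y_ge0 y_le1.
Qed.
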